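(* Let $k\ge 1$ and consider the Kneser graph $K(2k+1,k)$. Let $r_{max}=\binom{2k}{k-1}$, and for real $r>0$ define $$\beta(r)=\binom{2k+1}{k}-\frac{1}{r}\binom{2k}{k-1}^2-r.$$ Then for every real $r^*$ with $0<r^*\le r_{max}$, $$\min\{|B(S)| : S\subseteq V,\ r^*\le |S|\le r_{max}\}\;\ge\;\beta(r^* ).$$
   Context: The Kneser graph $K(n,k)$ has as vertices the $k$-element subsets of $[n]$, with two vertices adjacent if and only if they are disjoint. For a graph $G=(V,E)$ and $S\subseteq V$, the boundary of $S$ is $B(S)=\{a\in V\setminus S:\exists b\in S,\ (a,b)\in E\}$. *)

From HB Require Import structures.
From mathcomp Require Import all_boot all_order all_algebra.
Set Implicit Arguments. Unset Strict Implicit. Unset Printing Implicit Defensive.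
Import Order.TTheory GRing.Theory Num.Theory.

Definition kneser_V (n k : nat) : {set {set 'I_n}} :=
  [set A : {set 'I_n} | #|A| == k].

Definition kneser_adj (n : nat) (a b : {set 'I_n}) : bool := [disjoint a & b].

Definition kneser_boundary (n k : nat) (S : {set {set 'I_n}}) : {set {set 'I_n}} :=
  [set a in kneser_V n k :\: S | [exists b in S, kneser_adj a b]].

Definition kbeta (R : realFieldType) (k : nat) (r : R) : R :=
  ('C(2 * k + 1, k))%:R - (('C(2 * k, k.-1) ^ 2)%N)%:R / r - r.

From HB Require Import structures.
From mathcomp Require Import all_boot all_order all_algebra.
From mathcomp Require Import zify ring lra.
Import Order.TTheory GRing.Theory Num.Theory.
Set Implicit Arguments. Unset Strict Implicit. Unset Printing Implicit Defensive.
Local Open Scope ring_scope.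

(* Let V be the k-subsets of [2k+1], S' the vertices outside S and its
   boundary, s = |S|, t = |S'|, N = |V| = C(2k+1,k) and M = C(2k,k-1).  No edge
   joins S to S'.  Adjacency in K(2k+1,k) is the up operator U from k-sets to
   (k+1)-sets followed by complementation, and the identity
   |U f|^2 = |D f|^2 + (n - 2j) |f|^2 for f on the j-sets of an n-set (D the
   down operator) shows by induction on j that |U f| <= k |f| when f sums to 0
   on the k-sets.  The expander mixing argument then gives
   (s t (k+1))^2 <= k^2 s (N - s) t (N - t), which together with
   k N = (2k+1) M forces s t <= M^2.  Hence |B(S)| = N - s - t
   >= N - M^2/s - s, and s + M^2/s is decreasing on (0, M]. *)

Section DoubleCounting.
Variables (R : comNzRingType) (A B : finType) (X : {set A}) (U : {set B}).
Variable P : B -> A -> bool.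

Lemma sum_indicator (Q : pred A) :
  \sum_(x in X) (Q x)%:R = #|[set x in X | Q x]|%:R :> R.
Proof.
transitivity (\sum_(x in X | Q x) (1 : R)).
  by rewrite big_mkcondr /=; apply: eq_bigr => x _; case: (Q x).
by rewrite sumr_const; congr (_ *+ _); apply: eq_card => x; rewrite inE.
Qed.

Lemma exchange_weighted_sum (f : B -> R) (h : A -> R) :
  \sum_(x in X) h x * (\sum_(u in U | P u x) f u) =
  \sum_(u in U) f u * (\sum_(x in X | P u x) h x).
Proof.
under eq_bigr do rewrite mulr_sumr.
rewrite (exchange_big_dep (mem U)) /=; last by move=> x u _ /andP[].
apply: eq_bigr => u uU; rewrite mulr_sumr; apply: eq_big => [x|x _]; last exact: mulrC.
by rewrite uU.
Qed.

Lemma sum_sqr_partial_sums (f : B -> R) :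
  \sum_(x in X) (\sum_(u in U | P u x) f u) ^+ 2 =
  \sum_(u in U) \sum_(u' in U) f u * f u' * #|[set x in X | P u x && P u' x]|%:R.
Proof.
have sqrE x : (\sum_(u in U | P u x) f u) ^+ 2 =
    \sum_(u in U) \sum_(u' in U) f u * f u' * (P u x && P u' x)%:R.
  rewrite expr2 big_distrlr big_mkcondr /=; apply: eq_bigr => u _.
  case: (P u x); last by rewrite big1 // => u' _; rewrite mulr0.
  rewrite big_mkcondr /=; apply: eq_bigr => u' _.
  by case: (P u' x); rewrite ?mulr1 ?mulr0.
under eq_bigr do rewrite sqrE.
rewrite exchange_big; apply: eq_bigr => u _; rewrite exchange_big.
by apply: eq_bigr => u' _; rewrite -sum_indicator mulr_sumr.
Qed.

End DoubleCounting.

Section CauchySchwarz.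
Variables (R : realDomainType) (A : finType) (X : {set A}).

Lemma sum_sqr_ge0 (x : A -> R) : 0 <= \sum_(i in X) x i ^+ 2.
Proof. by apply: sumr_ge0 => i _; apply: sqr_ge0. Qed.

Lemma cauchy_schwarz (x y : A -> R) :
  (\sum_(i in X) x i * y i) ^+ 2 <= (\sum_(i in X) x i ^+ 2) * (\sum_(i in X) y i ^+ 2).
Proof.
have lagrange : \sum_(i in X) \sum_(j in X) (x i * y j - x j * y i) ^+ 2 =
    2 * ((\sum_(i in X) x i ^+ 2) * (\sum_(i in X) y i ^+ 2) - (\sum_(i in X) x i * y i) ^+ 2).
  transitivity (\sum_(i in X) \sum_(j in X) (x i ^+ 2 * y j ^+ 2 + y i ^+ 2 * x j ^+ 2
                                              - 2 * (x i * y i) * (x j * y j))).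
    by apply: eq_bigr => i _; apply: eq_bigr => j _; ring.
  under eq_bigr do rewrite sumrB big_split /=.
  rewrite sumrB big_split /= -!big_distrlr /= -mulr_sumr; ring.
have : 0 <= \sum_(i in X) \sum_(j in X) (x i * y j - x j * y i) ^+ 2.
  by apply: sumr_ge0 => i _; apply: sum_sqr_ge0.
by rewrite lagrange pmulr_rge0 // subr_ge0.
Qed.

Lemma sum_mul_le_of_sum_sqr_le (x y : A -> R) (c : R) : 0 <= c ->
  \sum_(i in X) y i ^+ 2 <= c * \sum_(i in X) x i * y i ->
  \sum_(i in X) x i * y i <= c * \sum_(i in X) x i ^+ 2.
Proof.
move=> c_ge0 y_le; have cs := cauchy_schwarz x y; have x_ge0 := sum_sqr_ge0 x.
have [xy_le0 | xy_gt0] := lerP (\sum_(i in X) x i * y i) 0.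
  exact: le_trans xy_le0 (mulr_ge0 c_ge0 x_ge0).
by rewrite -(ler_pM2l xy_gt0) -expr2; apply: le_trans cs _; nra.
Qed.

End CauchySchwarz.

Section Levels.
Variable T : finType.

Definition level (j : nat) : {set {set T}} := [set A : {set T} | #|A| == j].

Local Open Scope nat_scope.

Lemma card_level_subsets (X : {set T}) j :
  #|[set v in level j | v \subset X]| = 'C(#|X|, j).
Proof.
rewrite -cards_draws; apply: eq_card => v; rewrite !inE; exact: andbC.
Qed.

Lemma card_level_supsets (X : {set T}) j : j <= #|T| ->
  #|[set w in level j | X \subset w]| = 'C(#|T| - #|X|, #|T| - j).
Proof.
move=> leJT; have -> : #|T| - #|X| = #|~: X| by rewrite -(cardsC X) addKn.
rewrite -cards_draws -(card_imset _ (@setC_inj T)).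
apply: eq_card => w; apply/idP/imsetP => [|[v]].
  rewrite !inE => /andP[/eqP cw Xw]; exists (~: w); last by rewrite setCK.
  by rewrite inE setCS Xw cardsCs setCK cw eqxx.
rewrite inE => /andP[vX /eqP cv] ->; rewrite !inE -setCS setCK vX andbT.
by rewrite cardsCs setCK cv subKn.
Qed.

Lemma card_level_supsets_succ (X : {set T}) j : #|X| = j -> j < #|T| ->
  #|[set w in level j.+1 | X \subset w]| = #|T| - j.
Proof.
move=> cX ltJT; rewrite card_level_supsets // cX.
have -> : #|T| - j = (#|T| - j.+1).+1 by lia.
by rewrite binSn.
Qed.

Lemma card_level_common_supsets (u u' : {set T}) j : j.+2 <= #|T| ->
  #|u| = j.+1 -> #|u'| = j.+1 -> u != u' ->
  #|[set w in level j.+2 | (u \subset w) && (u' \subset w)]| =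
  #|[set v in level j | (v \subset u) && (v \subset u')]|.
Proof.
move=> leJT cu cu' neq_uu'.
have -> : [set w in level j.+2 | (u \subset w) && (u' \subset w)] =
          [set w in level j.+2 | u :|: u' \subset w].
  by apply/setP => w; rewrite !inE subUset.
have -> : [set v in level j | (v \subset u) && (v \subset u')] =
          [set v in level j | v \subset u :&: u'].
  by apply/setP => v; rewrite !inE subsetI.
rewrite card_level_supsets // card_level_subsets.
have cUI := cardsUI u u'; have cU : #|u :|: u'| <= #|T| := max_card _.
have cI : #|u :&: u'| <= j.
  rewrite -ltnS -cu ltn_neqAle subset_leq_card ?subsetIl // andbT.
  apply: contra neq_uu' => /eqP cIu.
  have eq_Iu : u :&: u' = u by apply/eqP; rewrite eqEcard subsetIl cIu leqnn.
  by rewrite eqEcard -{1}eq_Iu subsetIr cu cu' /=.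
have [cIj | cIj] := eqVneq #|u :&: u'| j.
  have -> : #|T| - #|u :|: u'| = #|T| - j.+2 by lia.
  by rewrite cIj !binn.
by move/eqP: cIj => cIj; rewrite !bin_small //; lia.
Qed.

End Levels.

Section RealInequalities.
Variable R : realFieldType.

Lemma mixing_mul_le_sqr (K N M s t : R) : 0 < K -> K * N = (2 * K + 1) * M ->
  0 <= s <= N -> 0 <= t <= N ->
  (s * t * (K + 1)) ^+ 2 <= K ^+ 2 * (s * (N - s)) * (t * (N - t)) -> s * t <= M ^+ 2.
Proof.
move=> K_gt0 KN /andP[s_ge0 sN] /andP[t_ge0 tN] mix.
rewrite leNgt; apply/negP => M2_lt.
have M_ge0 : 0 <= M by nra.
have P_gt0 : 0 < s * t by nra.
have mix' : s * t * (K + 1) ^+ 2 <= K ^+ 2 * ((N - s) * (N - t)).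
  by rewrite -(ler_pM2l P_gt0); nra.
have sum_gt : 2 * M < s + t.
  have sq := sqr_ge0 (s - t); have : 4 * M ^+ 2 < (s + t) ^+ 2 by nra.
  nra.
have : s * t * (2 * K + 1) < (2 * K + 1) * M ^+ 2.
  have -> : (2 * K + 1) * M ^+ 2 = K ^+ 2 * N ^+ 2 - 2 * K ^+ 2 * N * M.
    rewrite [RHS](_ : _ = (K * N) * (K * N - 2 * K * M)); last by ring.
    by rewrite KN; ring.
  have KKN_gt0 : 0 < K ^+ 2 * N by nra.
  have : K ^+ 2 * N * (2 * M) < K ^+ 2 * N * (s + t) by rewrite ltr_pM2l.
  nra.
nra.
Qed.

Lemma add_le_of_mul_le_sqr (r s t M : R) : 0 < r -> r <= s <= M -> 0 <= t ->
  s * t <= M ^+ 2 -> s + t <= M ^+ 2 / r + r.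
Proof.
move=> r_gt0 /andP[rs sM] t_ge0 st_le.
rewrite -(ler_pM2l (mulr_gt0 r_gt0 (lt_le_trans r_gt0 rs))).
have -> : r * s * (M ^+ 2 / r + r) = s * (M ^+ 2 + r ^+ 2) by field; rewrite gt_eqF.
have rs_le : r * s <= M ^+ 2 by nra.
have : (s - r) * (r * s) <= (s - r) * M ^+ 2 by rewrite ler_wpM2l // subr_ge0.
nra.
Qed.

End RealInequalities.

Section UpDown.
Variables (R : realFieldType) (T : finType).
Implicit Types (f g : {set T} -> R) (j : nat).

Definition up j f (w : {set T}) := \sum_(u in level T j | u \subset w) f u.
Definition down j f (v : {set T}) := \sum_(u in level T j.+1 | v \subset u) f u.
Definition sqnorm j f := \sum_(u in level T j) f u ^+ 2.

Lemma up_down_adjoint j f g :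
  \sum_(v in level T j) g v * down j f v = \sum_(u in level T j.+1) f u * up j g u.
Proof. exact: (exchange_weighted_sum _ _ (fun u v : {set T} => v \subset u)). Qed.

Lemma up_one j w : up j (fun _ => 1) w = 'C(#|w|, j)%:R.
Proof.
rewrite /up -card_level_subsets -sumr_const.
by apply: eq_bigl => v; rewrite inE.
Qed.

Lemma sum_down j f :
  \sum_(v in level T j) down j f v = j.+1%:R * \sum_(u in level T j.+1) f u.
Proof.
under eq_bigr do rewrite -[down _ _ _]mul1r.
rewrite up_down_adjoint mulr_sumr; apply: eq_bigr => u; rewrite inE => /eqP cu.
by rewrite up_one cu binSn mulrC.
Qed.

Lemma sqnorm_up_down j f : (j.+2 <= #|T|)%N ->
  sqnorm j.+2 (up j.+1 f) = sqnorm j (down j f) + (#|T|%:R - 2 * j.+1%:R) * sqnorm j.+1 f.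
Proof.
move=> leJT; rewrite /sqnorm /up /down.
rewrite (sum_sqr_partial_sums _ _ (fun u w : {set T} => u \subset w)).
rewrite (sum_sqr_partial_sums _ _ (fun u v : {set T} => v \subset u)).
rewrite mulr_sumr -big_split /=; apply: eq_bigr => u uL.
have cu : #|u| = j.+1 by move: uL; rewrite inE => /eqP.
rewrite (bigD1 u uL) [X in _ = X + _](bigD1 u uL) /=.
under eq_bigr => u' /andP[u'L neq_u'u].
  have cu' : #|u'| = j.+1 by apply/eqP; move: (u'L : u' \in level T j.+1); rewrite inE.
  rewrite (card_level_common_supsets leJT cu cu') 1?eq_sym //.
  over.
under eq_finset do rewrite andbb.
have -> : [set v in level T j | (v \subset u) && (v \subset u)] = [set v in level T j | v \subset u].
  by apply: eq_finset => v; rewrite andbb.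
rewrite card_level_supsets_succ // card_level_subsets cu binSn natrB 1?ltnW //.
set off_diagonal := \sum_(_ | _) _; ring.
Qed.

Lemma sqnorm_up_le j f : (j < #|T|)%N -> \sum_(u in level T j) f u = 0 ->
  sqnorm j.+1 (up j f) <= j%:R * (#|T|%:R - j%:R - 1) * sqnorm j f.
Proof.
elim: j f => [|j IHj] f ltJT sum_f0.
  rewrite !mul0r /sqnorm big1 // => w _.
  rewrite /up (eq_bigl (mem (level T 0))) ?sum_f0 ?expr0n // => u.
  by apply: andb_idr; rewrite inE => /eqP/cards0_eq ->; apply: sub0set.
set g := down j f.
have sum_g0 : \sum_(v in level T j) g v = 0 by rewrite sum_down sum_f0 mulr0.
have c_ge0 : 0 <= j%:R * (#|T|%:R - j%:R - 1) :> R.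
  have : j.+1%:R <= #|T|%:R :> R by rewrite ler_nat ltnW.
  by rewrite -natr1 => ?; rewrite mulr_ge0 //; lra.
(* Adjointness turns the induction hypothesis for D f into a bound on |D f|^2. *)
have sqnorm_g : sqnorm j g <= j%:R * (#|T|%:R - j%:R - 1) * sqnorm j.+1 f.
  have adj_g : sqnorm j g = \sum_(u in level T j.+1) f u * up j g u.
    by rewrite -up_down_adjoint; apply: eq_bigr => v _; rewrite expr2.
  rewrite adj_g; apply: sum_mul_le_of_sum_sqr_le c_ge0 _; rewrite -adj_g.
  exact: IHj (ltnW ltJT) sum_g0.
have -> : j.+1%:R * (#|T|%:R - j.+1%:R - 1) =
          j%:R * (#|T|%:R - j%:R - 1) + (#|T|%:R - 2 * j.+1%:R) :> R.
  by rewrite -!natr1; ring.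
by rewrite sqnorm_up_down // [X in _ <= X]mulrDl lerD2r.
Qed.

End UpDown.

Section CrossIndependentSets.
Variables (R : realFieldType) (T : finType) (V : {set T}) (adj : rel T) (d : nat) (lam : R).
Hypothesis adj_sym : symmetric adj.
Hypothesis regular : forall u, u \in V -> #|[set v in V | adj u v]| = d.
Implicit Types (f : T -> R) (S : {set T}).

Definition adj_sum f u := \sum_(v in V | adj u v) f v.

Hypothesis adj_sum_contracts : forall f, \sum_(u in V) f u = 0 ->
  \sum_(u in V) adj_sum f u ^+ 2 <= lam ^+ 2 * \sum_(u in V) f u ^+ 2.

Let N : R := #|V|%:R.
Let ind S u : R := (u \in S)%:R.

Lemma adj_sum_const (c : R) u : u \in V -> adj_sum (fun _ => c) u = c * d%:R.
Proof.
move=> uV; rewrite mulr_natr -(regular uV) -sumr_const.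
by apply: eq_bigl => v; rewrite inE.
Qed.

Lemma sum_adj_sum f : \sum_(u in V) adj_sum f u = d%:R * \sum_(u in V) f u.
Proof.
under eq_bigr do rewrite -[adj_sum _ _]mul1r.
rewrite (exchange_weighted_sum _ _ (fun v u => adj u v)) mulr_sumr.
apply: eq_bigr => v vV; rewrite mulrC; congr (_ * _).
rewrite -[d%:R]mul1r -(adj_sum_const 1 vV); apply: eq_bigl => u; by rewrite adj_sym.
Qed.

Lemma sum_ind S : S \subset V -> \sum_(u in V) ind S u = #|S|%:R.
Proof.
move=> SV; rewrite sum_indicator; congr _%:R; apply: eq_card => u.
by rewrite inE andb_idl // => /(subsetP SV).
Qed.

Lemma sum_centered_ind S : S \subset V -> \sum_(u in V) (N * ind S u - #|S|%:R) = 0.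
Proof.
by move=> SV; rewrite sumrB -mulr_sumr sum_ind // sumr_const mulr_natl subrr.
Qed.

Lemma sum_sqr_centered_ind S : S \subset V ->
  \sum_(u in V) (N * ind S u - #|S|%:R) ^+ 2 = N * #|S|%:R * (N - #|S|%:R).
Proof.
move=> SV; set s : R := #|S|%:R.
transitivity (\sum_(u in V) ((N ^+ 2 - 2 * N * s) * ind S u + s ^+ 2)).
  by apply: eq_bigr => u _; rewrite /ind; case: (u \in S) => /=; ring.
by rewrite big_split /= -mulr_sumr sum_ind // sumr_const -mulr_natl; rewrite -/s -/N; ring.
Qed.

Lemma cross_independent_mixing S S' : S \subset V -> S' \subset V ->
    (forall u v, u \in S -> v \in S' -> ~~ adj u v) ->
  (#|S|%:R * #|S'|%:R * d%:R) ^+ 2 <=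
    lam ^+ 2 * (#|S|%:R * (N - #|S|%:R)) * (#|S'|%:R * (N - #|S'|%:R)).
Proof.
move=> SV S'V no_edge; set s : R := #|S|%:R; set t : R := #|S'|%:R.
(* Centred indicators of S and S', scaled by N to avoid division. *)
pose f u := N * ind S u - s; pose g u := N * ind S' u - t.
have adj_f u : u \in V -> adj_sum f u = N * adj_sum (ind S) u - s * d%:R.
  by move=> uV; rewrite -(adj_sum_const s uV) /adj_sum sumrB mulr_sumr.
have no_cross u : ind S' u * adj_sum (ind S) u = 0.
  rewrite /ind; case S'u: (u \in S'); last by rewrite mul0r.
  rewrite mul1r /adj_sum big1 // => v /andP[_ adj_uv]; case Sv: (v \in S) => //.
  by move: (no_edge v u Sv S'u); rewrite adj_sym adj_uv.
have cross : \sum_(u in V) g u * adj_sum f u = - (N * s * t * d%:R).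
  transitivity (\sum_(u in V) (t * s * d%:R - N * s * d%:R * ind S' u - N * t * adj_sum (ind S) u)).
    apply: eq_bigr => u uV; rewrite adj_f // /g.
    by rewrite -[RHS]addr0 -[0](mulr0 (N ^+ 2)) -(no_cross u); ring.
  rewrite !sumrB sumr_const -!mulr_sumr sum_ind // sum_adj_sum sum_ind //.
  by rewrite -mulr_natl; ring.
have cs := cauchy_schwarz V g (adj_sum f); rewrite cross sqrrN in cs.
have contract := adj_sum_contracts (sum_centered_ind SV).
rewrite !sum_sqr_centered_ind // in cs contract.
case: (posnP #|V|) => [V0 | V_gt0].
  have s0 : s = 0 by move: (subset_leq_card SV); rewrite V0 leqn0 => /eqP; rewrite /s => ->.
  by rewrite s0 !(mul0r, mulr0, expr0n).
have N_gt0 : 0 < N by rewrite ltr0n.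
have t_le : t <= N by rewrite ler_nat subset_leq_card.
have weight_ge0 : 0 <= N * t * (N - t) by rewrite !mulr_ge0 ?subr_ge0 // ltW.
rewrite -(ler_pM2l (exprn_gt0 2 N_gt0)).
have -> : N ^+ 2 * (s * t * d%:R) ^+ 2 = (N * s * t * d%:R) ^+ 2 by ring.
have -> : N ^+ 2 * (lam ^+ 2 * (s * (N - s)) * (t * (N - t))) =
          N * t * (N - t) * (lam ^+ 2 * (N * s * (N - s))) by ring.
exact: le_trans cs (ler_wpM2l weight_ge0 contract).
Qed.

End CrossIndependentSets.

Section Kneser.
Variable k : nat.
Local Notation n := (2 * k + 1)%N.
Local Notation V := (kneser_V n k).
Implicit Types (u v : {set 'I_n}) (S : {set {set 'I_n}}).

Lemma card_kneser_V : #|V| = 'C(n, k).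
Proof. by rewrite card_draws card_ord. Qed.

Lemma kneser_adj_sym : symmetric (@kneser_adj n).
Proof. by move=> u v; apply: disjoint_sym. Qed.

Lemma kneser_adjE u v : kneser_adj u v = (v \subset ~: u).
Proof. by rewrite /kneser_adj disjoint_sym disjoints_subset. Qed.

Lemma kneser_regular u : u \in V -> #|[set v in V | kneser_adj u v]| = k.+1.
Proof.
rewrite inE => /eqP cu.
have cCu : #|~: u| = k.+1 by move: (cardsC u); rewrite card_ord cu; lia.
have -> : [set v in V | kneser_adj u v] = [set v in level _ k | v \subset ~: u].
  by apply/setP => v; rewrite !inE kneser_adjE.
by rewrite card_level_subsets cCu binSn.
Qed.

Lemma kneser_adj_sumE (R : realFieldType) (f : {set 'I_n} -> R) u :
  adj_sum V (@kneser_adj n) f u = up k f (~: u).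
Proof. by apply: eq_bigl => v; rewrite kneser_adjE. Qed.

Lemma kneser_adj_sum_contracts (R : realFieldType) (f : {set 'I_n} -> R) :
  \sum_(u in V) f u = 0 ->
  \sum_(u in V) adj_sum V (@kneser_adj n) f u ^+ 2 <= k%:R ^+ 2 * \sum_(u in V) f u ^+ 2.
Proof.
move=> sum_f0; under eq_bigr do rewrite kneser_adj_sumE.
have -> : \sum_(u in V) up k f (~: u) ^+ 2 = sqnorm k.+1 (up k f).
  rewrite /sqnorm [RHS](reindex_inj (@setC_inj _)); apply: eq_bigl => u.
  by move: (cardsC u); rewrite !inE card_ord => ?; apply/eqP/eqP; lia.
apply: le_trans (sqnorm_up_le _ _) _; rewrite ?card_ord //; first lia.
have -> : k%:R * (n%:R - k%:R - 1) = k%:R ^+ 2 :> R by rewrite natrD natrM; ring.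
exact: lexx.
Qed.

Lemma kneser_cross_independent S S' : (0 < k)%N -> S \subset V -> S' \subset V ->
    (forall u v, u \in S -> v \in S' -> ~~ kneser_adj u v) ->
  (#|S| * #|S'| <= 'C(2 * k, k.-1) ^ 2)%N.
Proof.
move=> k_gt0 SV S'V no_edge.
have := cross_independent_mixing kneser_adj_sym kneser_regular
  (@kneser_adj_sum_contracts rat) SV S'V no_edge.
rewrite -natr1 => mix.
have binE : (k * 'C(n, k) = n * 'C(2 * k, k.-1))%N.
  by have := mul_bin_diag n k.-1; rewrite prednK // addn1 /= => ->.
rewrite -(ler_nat rat) natrM natrX; apply: mixing_mul_le_sqr mix.
- by rewrite ltr0n.
- by rewrite card_kneser_V -natrM binE natrM natrD natrM.
all: by rewrite ler0n ler_nat subset_leq_card.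
Qed.

Lemma kneser_boundary_partition S : S \subset V ->
  (#|S| + #|kneser_boundary k S| + #|V :\: S :\: kneser_boundary k S| = #|V|)%N.
Proof.
move=> SV; have BVS : kneser_boundary k S \subset V :\: S.
  by apply/subsetP => u; rewrite inE => /andP[].
have := cardsID (kneser_boundary k S) (V :\: S); rewrite (setIidPr BVS) -addnA => ->.
by have := cardsID S V; rewrite (setIidPr SV).
Qed.

Lemma kneser_boundary_separates S u v :
  u \in S -> v \in V :\: S :\: kneser_boundary k S -> ~~ kneser_adj u v.
Proof.
move=> uS; rewrite !inE => /andP[vB vVS]; apply: contra vB => adj_uv.
by rewrite vVS; apply/existsP; exists u; rewrite uS kneser_adj_sym.
Qed.

End Kneser.

Theorem lemma3p4 (R : realFieldType) (k : nat) (rs : R)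
    (S : {set {set 'I_(2 * k + 1)}}) :
  (1 <= k)%N ->
  0 < rs -> rs <= ('C(2 * k, k.-1))%:R ->
  S \subset kneser_V (2 * k + 1) k ->
  rs <= (#|S|)%:R -> (#|S| <= 'C(2 * k, k.-1))%N ->
  kbeta k rs <= (#|kneser_boundary k S|)%:R.
Proof.
move=> k_gt0 rs_gt0 rs_le SV rs_leS S_le.
set V := kneser_V _ k in SV *; set B := kneser_boundary k S; set S' := V :\: S :\: B.
have S'V : S' \subset V by rewrite /S' setDDl subsetDl.
have prod_le := kneser_cross_independent k_gt0 SV S'V (@kneser_boundary_separates k S).
have partition := kneser_boundary_partition SV.
have := add_le_of_mul_le_sqr rs_gt0 (s := #|S|%:R) (t := #|S'|%:R) (M := 'C(2 * k, k.-1)%:R).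
rewrite rs_leS ler_nat S_le ler0n -natrM -natrX ler_nat prod_le => /(_ isT isT isT).
rewrite /kbeta -card_kneser_V -partition !natrD natrX; lra.
Qed.
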